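(* Let $A\in\mathbb{R}^{n\times n}$ and consider $x_{k+1}=Ax_k$ on $\mathbb{R}^n$. Let $\xi\in\mathbb{R}^n$ and suppose that for every bounded set $P\subseteq\mathbb{R}^n$ there exists a positive integer $k$ with $A^k\xi\notin P$. Then $\lim_{k\to\infty}\|A^k\xi\|_2=\infty$; that is, for every bounded set $P\subseteq\mathbb{R}^n$ there exists $K\in\mathbb{Z}^+$ such that $A^k\xi\notin P$ for all $k\ge K$. *)

From HB Require Import structures.
From mathcomp Require Import all_boot all_order all_algebra.
From mathcomp Require Import reals.
Set Implicit Arguments. Unset Strict Implicit. Unset Printing Implicit Defensive.
Import Order.TTheory GRing.Theory Num.Theory.
Local Open Scope ring_scope.

Definition eucl_norm (R : realType) (n : nat) (x : 'cV[R]_n) : R :=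
  Num.sqrt (\sum_(i < n) x i 0 ^+ 2).

Definition bounded_set (R : realType) (n : nat) (P : 'cV[R]_n -> Prop) : Prop :=
  exists M : R, forall x, P x -> eucl_norm x <= M.

Definition traj (R : realType) (n : nat) (A : 'M[R]_n) (xi : 'cV[R]_n) (k : nat)
  : 'cV[R]_n := A ^+ k *m xi.

From HB Require Import structures.
From mathcomp Require Import all_boot all_order all_algebra all_field.
From mathcomp Require Import boolp reals complex ring.
Set Implicit Arguments. Unset Strict Implicit. Unset Printing Implicit Defensive.
Import Order.TTheory GRing.Theory Num.Theory.
Local Open Scope ring_scope.

(* If the orbit A^k xi entered some bounded set for infinitely many k, it would
   be bounded, contradicting the hypothesis.  To see this, complexify and use
   Cayley-Hamilton and Bezout to split xi into components u with
   (A - l)^m u = 0; such a component still returns to a bounded set infinitely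
   often, because A commutes with polynomials in A.  If |l| < 1, the orbit of u
   is bounded anyway.  If |l| > 1, an eigenvector's orbit grows like
   |l|^k >= 1 + k (|l| - 1), so it must be 0; if |l| = 1 and (A - l)^2 v = 0,
   the orbit of v grows like k |(A - l) v|, so (A - l) v = 0.  Applied to
   (A - l)^j u for decreasing j, this leaves u = 0 or an eigenvector of modulus
   one, whose orbit has constant norm. *)

Section L1Norm.
Variable C : numDomainType.

Definition l1norm p (x : 'cV[C]_p) : C := \sum_i `|x i 0|.

Lemma l1norm_ge0 p (x : 'cV[C]_p) : 0 <= l1norm x.
Proof. exact: sumr_ge0. Qed.

Lemma l1norm0 p : l1norm (0 : 'cV[C]_p) = 0.
Proof. by rewrite /l1norm big1 // => i _; rewrite mxE normr0. Qed.

Lemma l1norm0_eq0 p (x : 'cV[C]_p) : l1norm x = 0 -> x = 0.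
Proof.
move=> x0; apply/matrixP => i j; rewrite (ord1 j) mxE.
by apply/normr0_eq0; apply: (psumr_eq0P _ x0).
Qed.

Lemma ler_l1normD p (x y : 'cV[C]_p) : l1norm (x + y) <= l1norm x + l1norm y.
Proof. by rewrite -big_split ler_sum // => i _; rewrite mxE ler_normD. Qed.

Lemma l1normN p (x : 'cV[C]_p) : l1norm (- x) = l1norm x.
Proof. by apply: eq_bigr => i _; rewrite mxE normrN. Qed.

Lemma l1normZ p a (x : 'cV[C]_p) : l1norm (a *: x) = `|a| * l1norm x.
Proof.
by rewrite /l1norm mulr_sumr; apply: eq_bigr => i _; rewrite mxE normrM.
Qed.

Lemma ler_l1norm_mulmx q p (P : 'M[C]_(q, p)) (x : 'cV[C]_p) :
  l1norm (P *m x) <= (\sum_i \sum_j `|P i j|) * l1norm x.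
Proof.
rewrite /l1norm mulr_suml ler_sum // => i _; rewrite mxE mulr_suml.
apply: le_trans (ler_norm_sum _ _ _) _; apply: ler_sum => j _.
rewrite normrM ler_wpM2l // /l1norm (bigD1 j) //= lerDl.
exact: sumr_ge0.
Qed.

End L1Norm.

Section Orbits.
Variables (C : numDomainType) (p : nat) (B : 'M[C]_p).

Definition bounded_orbit u := exists M, forall k, l1norm (B ^+ k *m u) <= M.

Definition often_bounded_orbit u :=
  exists M, forall K, exists2 k, (K <= k)%N & l1norm (B ^+ k *m u) <= M.

Lemma bounded_orbit0 : bounded_orbit 0.
Proof. by exists 0 => k; rewrite mulmx0 l1norm0. Qed.

Lemma bounded_orbitD u v :
  bounded_orbit u -> bounded_orbit v -> bounded_orbit (u + v).
Proof.
move=> [Mu Hu] [Mv Hv]; exists (Mu + Mv) => k; rewrite mulmxDr.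
exact: le_trans (ler_l1normD _ _) (lerD (Hu k) (Hv k)).
Qed.

Lemma often_bounded_orbit_comm P u :
  GRing.comm B P -> often_bounded_orbit u -> often_bounded_orbit (P *m u).
Proof.
move=> cBP [M HM]; exists ((\sum_i \sum_j `|P i j|) * M) => K.
have [k Kk Hk] := HM K; exists k => //.
rewrite mulmxA mulmxE -(commrX k (commr_sym cBP)) -mulmxE -mulmxA.
apply: le_trans (ler_l1norm_mulmx _ _) _; apply: ler_wpM2l => //.
by apply: sumr_ge0 => i _; apply: sumr_ge0.
Qed.

End Orbits.

Lemma often_natmul_le_eq0 (C : archiNumFieldType) (c M : C) :
  0 <= c -> (forall K, exists2 k, (K <= k)%N & k%:R * c <= M) -> c = 0.
Proof.
move=> c_ge0 often_le; apply/eqP/negPn/negP => c_neq0.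
have c_gt0 : 0 < c by rewrite lt0r c_neq0.
have [k0 _ M_ge] := often_le 0%N.
have M_ge0 : 0 <= M by apply: le_trans M_ge; rewrite mulr_ge0.
have [k Kk kc_le] := often_le (Num.bound (M / c)).
have : (Num.bound (M / c))%:R * c <= M.
  by apply: le_trans kc_le; rewrite ler_wpM2r // ler_nat.
by rewrite -ler_pdivlMr // lt_geF // archi_boundP // divr_ge0.
Qed.

Lemma bernoulli_ineq (C : numDomainType) (h : C) k :
  0 <= h -> 1 + k%:R * h <= (1 + h) ^+ k.
Proof.
move=> h_ge0; elim: k => [|k IH]; first by rewrite mul0r addr0 expr0.
rewrite exprS (le_trans _ (ler_wpM2l _ IH)) ?addr_ge0 //.
have -> : (1 + h) * (1 + k%:R * h) = 1 + k.+1%:R * h + k%:R * h ^+ 2.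
  by rewrite -natr1; ring.
by rewrite lerDl mulr_ge0 ?exprn_ge0.
Qed.

Lemma mulmx_exprS (K : pzRingType) p (B : 'M[K]_p) k (u : 'cV[K]_p) :
  B ^+ k.+1 *m u = B *m (B ^+ k *m u).
Proof. by rewrite exprS; apply/esym/mulmxA. Qed.

Lemma mulmx_exprSr (K : pzRingType) p (B : 'M[K]_p) k (u : 'cV[K]_p) :
  B ^+ k.+1 *m u = B ^+ k *m (B *m u).
Proof. by rewrite exprSr; apply/esym/mulmxA. Qed.

Section ShiftedMatrix.
Variables (K : comPzRingType) (p : nat) (B : 'M[K]_p) (l : K).
Local Notation N := (B - l%:M).

Lemma mulmx_shift (u : 'cV[K]_p) : B *m u = N *m u + l *: u.
Proof. by rewrite mulmxBl mul_scalar_mx subrK. Qed.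

Lemma comm_shift : GRing.comm B N.
Proof. by rewrite /GRing.comm mulrBr mulrBl -!mulmxE scalar_mxC. Qed.

Lemma eigen_exp_mulmx (v : 'cV[K]_p) k :
  N *m v = 0 -> B ^+ k *m v = l ^+ k *: v.
Proof.
move=> Nv0; elim: k => [|k IH]; first by rewrite !expr0 mul1mx scale1r.
by rewrite mulmx_exprS IH -scalemxAr mulmx_shift Nv0 add0r scalerA -exprSr.
Qed.

(* Multiplying by [l] avoids the exponent [k - 1] in [k l^(k-1) (N v)]. *)
Lemma jordan2_exp_mulmx (v : 'cV[K]_p) k : N *m (N *m v) = 0 ->
  l *: (B ^+ k *m v) = l ^+ k *: (l *: v + k%:R *: (N *m v)).
Proof.
move=> N2v0; elim: k => [|k IH].
  by rewrite expr0 mul1mx scale1r scale0r addr0.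
rewrite mulmx_exprS scalemxAr IH -scalemxAr mulmxDr -!scalemxAr.
rewrite (mulmx_shift v) (mulmx_shift (N *m v)) N2v0 add0r.
rewrite exprSr -scalerA; congr (_ *: _).
rewrite -natr1 scalerDl scale1r !scalerDr !scalerA [l * k%:R]mulrC.
by rewrite -addrA addrC -addrA.
Qed.

End ShiftedMatrix.

Lemma expmx_kernel_descent (K : pzRingType) p (N : 'M[K]_p)
    (S : 'cV[K]_p -> Prop) :
  (forall v, S v -> S (N *m v)) ->
  (forall v, S v -> N *m (N *m v) = 0 -> N *m v = 0) ->
  forall m u, S u -> N ^+ m *m u = 0 -> N *m u = 0.
Proof.
move=> S_N S_descent [|m] u Su.
  by rewrite expr0 mul1mx => ->; rewrite mulmx0.
elim: m => [|m IH]; first by rewrite expr1.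
have S_Nexp j : S (N ^+ j *m u).
  by elim: j => [|j IHj]; rewrite ?expr0 ?mul1mx // mulmx_exprS; apply: S_N.
move=> Nm0; apply: IH; rewrite mulmx_exprS.
by apply: S_descent (S_Nexp m) _; rewrite -!mulmx_exprS.
Qed.

Section PrimaryOrbits.
Variables (C : archiNumFieldType) (p : nat) (B : 'M[C]_p) (l : C).
Local Notation N := (B - l%:M).

Lemma bounded_orbit_norm_lt1 m u :
  `|l| < 1 -> N ^+ m *m u = 0 -> bounded_orbit B u.
Proof.
move=> l_lt1; elim: m u => [|m IH] u.
  by rewrite expr0 mul1mx => ->; apply: bounded_orbit0.
rewrite mulmx_exprSr => /IH [M HM].
have M_ge0 : 0 <= M := le_trans (l1norm_ge0 _) (HM 0%N).
have r_lt1 : 0 < 1 - `|l| by rewrite subr_gt0.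
pose T := l1norm u + M / (1 - `|l|).
exists T; elim=> [|k IHk].
  by rewrite expr0 mul1mx lerDl divr_ge0 // ltW.
rewrite mulmx_exprSr (mulmx_shift B l) mulmxDr -scalemxAr.
apply: le_trans (ler_l1normD _ _) _; rewrite l1normZ.
apply: le_trans (lerD (HM k) (ler_wpM2l (normr_ge0 l) IHk)) _.
rewrite -subr_ge0.
have -> : T - (M + `|l| * T) = (1 - `|l|) * l1norm u.
  by rewrite /T; field; rewrite lt0r_neq0.
by rewrite mulr_ge0 ?l1norm_ge0 // ltW.
Qed.

Lemma often_bounded_eigen_norm_gt1 v : 1 < `|l| ->
  often_bounded_orbit B v -> N *m v = 0 -> v = 0.
Proof.
move=> l_gt1 [M HM] Nv0; apply: l1norm0_eq0.
have h_gt0 : 0 < `|l| - 1 by rewrite subr_gt0.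
suff : (`|l| - 1) * l1norm v = 0.
  by move/eqP; rewrite mulf_eq0 gt_eqF //= => /eqP.
apply: (often_natmul_le_eq0 (M := M)) => [|K].
  by rewrite mulr_ge0 ?l1norm_ge0 // ltW.
have [k Kk HMk] := HM K; exists k => //; apply: le_trans HMk.
rewrite (eigen_exp_mulmx _ Nv0) l1normZ normrX mulrA ler_wpM2r ?l1norm_ge0 //.
have := bernoulli_ineq k (ltW h_gt0); rewrite subrKC; apply: le_trans.
by rewrite lerDr.
Qed.

Lemma often_bounded_jordan2_norm1 v : `|l| = 1 ->
  often_bounded_orbit B v -> N *m (N *m v) = 0 -> N *m v = 0.
Proof.
move=> l1 [M HM] N2v0; apply: l1norm0_eq0.
apply: (often_natmul_le_eq0 (M := M + l1norm v)) => [|K].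
  exact: l1norm_ge0.
have [k Kk HMk] := HM K; exists k => //.
have orbit_norm : l1norm (B ^+ k *m v) = l1norm (l *: v + k%:R *: (N *m v)).
  rewrite -[LHS]mul1r -l1 -l1normZ jordan2_exp_mulmx //.
  by rewrite l1normZ normrX l1 expr1n mul1r.
have lv_norm : l1norm (l *: v) = l1norm v by rewrite l1normZ l1 mul1r.
rewrite -(normr_nat C k) -l1normZ -(addKr (l *: v) (k%:R *: _)).
apply: le_trans (ler_l1normD _ _) _; rewrite l1normN lv_norm addrC -orbit_norm.
by rewrite lerD2r.
Qed.

Lemma often_bounded_primary_bounded m u : N ^+ m *m u = 0 ->
  often_bounded_orbit B u -> bounded_orbit B u.
Proof.
move=> Nmu0 often_u.
have often_N v : often_bounded_orbit B v -> often_bounded_orbit B (N *m v).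
  exact/often_bounded_orbit_comm/comm_shift.
case: (real_ltgtP (normr_real l) (real1 C)) => l_cmp1.
- exact: bounded_orbit_norm_lt1 l_cmp1 Nmu0.
- have eigen_eq0 := often_bounded_eigen_norm_gt1 l_cmp1.
  have Nu0 : N *m u = 0.
    apply: (expmx_kernel_descent often_N _ often_u Nmu0) => v often_v.
    exact/eigen_eq0/often_N.
  by rewrite (eigen_eq0 u often_u Nu0); apply: bounded_orbit0.
- have Nu0 : N *m u = 0.
    apply: (expmx_kernel_descent often_N _ often_u Nmu0) => v often_v.
    exact: often_bounded_jordan2_norm1.
  exists (l1norm u) => k.
  by rewrite (eigen_exp_mulmx _ Nu0) l1normZ normrX l_cmp1 expr1n mul1r.
Qed.

End PrimaryOrbits.

Section PrimaryDecomposition.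
Variables (F : closedFieldType) (p : nat) (B : 'M[F]_p.+1).
Variables (Q G : 'cV[F]_p.+1 -> Prop).
Hypothesis Q_horner : forall r u, Q u -> Q (horner_mx B r *m u).
Hypothesis G0 : G 0.
Hypothesis GD : forall u v, G u -> G v -> G (u + v).
Hypothesis G_primary : forall l m u, Q u -> (B - l%:M) ^+ m *m u = 0 -> G u.

Lemma horner_mx_mulmx (r s : {poly F}) (u : 'cV[F]_p.+1) :
  horner_mx B r *m (horner_mx B s *m u) = horner_mx B (r * s) *m u.
Proof. by rewrite mulmxA mulmxE rmorphM. Qed.

Lemma horner_mx_XsubC_exp l m :
  horner_mx B (('X - l%:P) ^+ m) = (B - l%:M) ^+ m.
Proof. by rewrite rmorphXn rmorphB /= horner_mx_X horner_mx_C. Qed.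

Lemma primary_decomposition q (u : 'cV[F]_p.+1) :
  q != 0 -> Q u -> horner_mx B q *m u = 0 -> G u.
Proof.
have [s] := ubnP (size q); elim: s q u => // s IH q u size_q q_neq0 Qu.
have [/eqP/size_poly1P [c c_neq0 ->]| size_q_neq1] := eqVneq (size q) 1.
  rewrite horner_mx_C mul_scalar_mx => /eqP.
  by rewrite scaler_eq0 (negbTE c_neq0) => /eqP ->.
move=> qu0.
have [l root_q_l] := closed_rootP _ size_q_neq1.
have [[|m] [q' /implyP /(_ q_neq0) q'_l_neq0 def_q]] := multiplicity_XsubC q l.
  by move: root_q_l; rewrite def_q expr0 mulr1 (negbTE q'_l_neq0).
have q'_neq0 : q' != 0.
  by apply: contraNneq q_neq0; rewrite def_q => ->; rewrite mul0r.
have : coprimep q' (('X - l%:P) ^+ m.+1).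
  by apply: coprimep_expr; rewrite coprimep_XsubC.
case/Bezout_eq1_coprimepP => -[a b] /= bezout.
(* The first summand is killed by (B - l)^(m+1), the second by q'(B). *)
have -> : u = horner_mx B (a * q') *m u
              + horner_mx B (b * ('X - l%:P) ^+ m.+1) *m u.
  by rewrite -mulmxDl -rmorphD bezout rmorph1 mul1mx.
apply: GD.
  apply: (G_primary (l := l) (m := m.+1) (Q_horner _ Qu)).
  rewrite -horner_mx_XsubC_exp horner_mx_mulmx mulrCA [_ * q']mulrC -def_q.
  by rewrite -horner_mx_mulmx qu0 mulmx0.
have size_q' : (size q' < size q)%N.
  rewrite def_q size_Mmonic ?monic_exp ?monicXsubC // size_exp_XsubC.
  by rewrite !addnS ltnS leq_addr.
apply: (IH q'); first exact: leq_trans size_q' size_q.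
- exact: q'_neq0.
- exact: Q_horner.
- by rewrite horner_mx_mulmx mulrCA -def_q -horner_mx_mulmx qu0 mulmx0.
Qed.

End PrimaryDecomposition.

Theorem often_bounded_orbit_bounded (C : archiClosedFieldType) p
    (B : 'M[C]_p.+1) u :
  often_bounded_orbit B u -> bounded_orbit B u.
Proof.
move=> often_u.
apply: (@primary_decomposition _ _ B (often_bounded_orbit B) (bounded_orbit B)
  _ _ _ _ (char_poly B)) => //.
- move=> r v; apply: often_bounded_orbit_comm.
  by rewrite /GRing.comm -!mulmxE; apply: comm_mx_horner.
- exact: bounded_orbit0.
- exact: bounded_orbitD.
- by move=> l m v /[swap]; apply: often_bounded_primary_bounded.
- exact: monic_neq0 (char_poly_monic B).
- by rewrite Cayley_Hamilton mul0mx.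
Qed.

Lemma complex_archimedean (R : archiRcfType) : Num.archimedean_axiom R[i].
Proof.
move=> z; rewrite normc_def; set r := Num.sqrt _.
exists (Num.bound r); rewrite -(rmorph_nat (real_complex R)) ltcR.
by rewrite archi_boundP // sqrtr_ge0.
Qed.

HB.instance Definition _ (R : archiRcfType) :=
  Num.NumDomain_bounded_isArchimedean.Build R[i] (@complex_archimedean R).

Section RealTrajectories.
Variable R : realType.
Local Notation toC := (real_complex R).
Local Open Scope complex_scope.

Lemma normcR (x : R) : `|x%:C| = `|x|%:C.
Proof. by rewrite normc_def /= expr0n addr0 sqrtr_sqr. Qed.

Lemma l1norm_map_real p (x : 'cV[R]_p) :
  l1norm (map_mx toC x) = (\sum_i `|x i 0|)%:C.
Proof. by rewrite rmorph_sum; apply: eq_bigr => i _; rewrite mxE normcR. Qed.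

Lemma abs_le_eucl_norm p (x : 'cV[R]_p) i : `|x i 0| <= eucl_norm x.
Proof.
rewrite -sqrtr_sqr ler_sqrt ?sumr_ge0 // => [|j _]; last exact: sqr_ge0.
by rewrite (bigD1 i) //= lerDl sumr_ge0 // => j _; apply: sqr_ge0.
Qed.

Lemma sum_abs_le_eucl_norm p (x : 'cV[R]_p) :
  \sum_i `|x i 0| <= p%:R * eucl_norm x.
Proof.
rewrite -[p in p%:R]card_ord mulr_natl -sumr_const.
by apply: ler_sum => i _; apply: abs_le_eucl_norm.
Qed.

Lemma eucl_norm_le_sum_abs p (x : 'cV[R]_p) : eucl_norm x <= \sum_i `|x i 0|.
Proof.
have S_ge0 : 0 <= \sum_i `|x i 0| by apply: sumr_ge0.
rewrite -(ger0_norm S_ge0) -sqrtr_sqr ler_sqrt ?sqr_ge0 // expr2 mulr_sumr.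
apply: ler_sum => i _; rewrite -real_normK ?num_real // expr2 ler_wpM2r //.
by rewrite (bigD1 i) //= lerDl sumr_ge0.
Qed.

Lemma often_bounded_traj_bounded n (A : 'M[R]_n) xi M :
  (forall K, exists2 k, (K <= k)%N & eucl_norm (traj A xi k) <= M) ->
  exists Mb, forall k, eucl_norm (traj A xi k) <= Mb.
Proof.
case: n A xi => [|n] A xi often_le.
  by exists 0 => k; rewrite /eucl_norm big_ord0 sqrtr0.
have traj_map k :
    map_mx toC (traj A xi k) = map_mx toC A ^+ k *m map_mx toC xi.
  by rewrite map_mxM rmorphXn.
have [|Mb HMb] :=
  @often_bounded_orbit_bounded _ _ (map_mx toC A) (map_mx toC xi).
  exists (n.+1%:R * M)%:C => K; have [k Kk HMk] := often_le K; exists k => //.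
  rewrite -traj_map l1norm_map_real lecR (le_trans (sum_abs_le_eucl_norm _)) //.
  by rewrite ler_wpM2l.
exists (complex.Re Mb) => k; have := HMb k.
rewrite -traj_map l1norm_map_real lecE => /andP[_].
exact/le_trans/eucl_norm_le_sum_abs.
Qed.

End RealTrajectories.

Theorem lemma5 (R : realType) (n : nat) (A : 'M[R]_n) (xi : 'cV[R]_n) :
  (forall P : 'cV[R]_n -> Prop, bounded_set P ->
     exists k : nat, (0 < k)%N /\ ~ P (traj A xi k)) ->
  forall P : 'cV[R]_n -> Prop, bounded_set P ->
    exists K : nat, (0 < K)%N /\ forall k : nat, (K <= k)%N -> ~ P (traj A xi k).
Proof.
move=> unbounded P [M HP]; apply: contrapT => no_K.
have often_le K : exists2 k, (K <= k)%N & eucl_norm (traj A xi k) <= M.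
  apply: contrapT => no_k; apply: no_K; exists K.+1; split=> // k /ltnW Kk Pk.
  by apply: no_k; exists k => //; apply: HP.
have [Mb HMb] := often_bounded_traj_bounded often_le.
have [k [_ []]] :=
  unbounded (fun x => eucl_norm x <= Mb) (ex_intro _ Mb (fun _ => id)).
exact: HMb.
Qed.
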